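(* The affine hypersurface $Q\subset\mathbf{A}^4_{\mathbf{C}}$ with coordinates $(t,s,z,w)$ defined by $(w^3-1)(t^2-1)=(z^3-1)(s^2-1)$ is rational. *)

From HB Require Import structures.
From mathcomp Require Import all_boot all_order all_algebra.
From mathcomp Require Import reals.
From mathcomp.real_closed Require Import complex.
From mathcomp.multinomials Require Import mpoly.

Set Implicit Arguments.
Unset Strict Implicit.
Unset Printing Implicit Defensive.

Import GRing.Theory Num.Theory.
Local Open Scope ring_scope.

Definition on_hyp (K : fieldType) (n : nat) (F : {mpoly K[n]}) (y : 'I_n -> K) :=
  F.@[y] = 0.

(* A rational map A^m --> A^n given componentwise by fractions num i / den i.
   It is evaluated at a point where all denominators are nonzero. *)
Definition ratmap_ev (K : fieldType) (m n : nat)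
  (num den : 'I_n -> {mpoly K[m]}) (x : 'I_m -> K) : 'I_n -> K :=
  fun i => (num i).@[x] / (den i).@[x].

Definition defined_at (K : fieldType) (m n : nat)
  (den : 'I_n -> {mpoly K[m]}) (x : 'I_m -> K) : Prop :=
  forall i, (den i).@[x] != 0.

(* The affine hypersurface V(F) in A^(n+1) is rational: there is a nonempty
   (hence dense) basic open D(a) of A^n and a Zariski-dense open subset
   V(F) /\ D(b) of V(F), together with mutually inverse regular maps
   (given by fractions of polynomials with denominators nonvanishing there)
   D(a) <-> V(F) /\ D(b).  I.e. V(F) is birational to A^n. *)
Definition rational_hypersurface (K : fieldType) (n : nat) (F : {mpoly K[n.+1]}) : Prop :=
  exists (a : {mpoly K[n]}) (b : {mpoly K[n.+1]})
         (fnum fden : 'I_n.+1 -> {mpoly K[n]})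
         (gnum gden : 'I_n -> {mpoly K[n.+1]}),
    [/\ a != 0,
        (* V(F) /\ D(b) is Zariski dense in V(F) *)
        (forall p : {mpoly K[n.+1]},
            (forall y, on_hyp F y -> b.@[y] != 0 -> p.@[y] = 0) ->
            forall y, on_hyp F y -> p.@[y] = 0),
        (forall x : 'I_n -> K, a.@[x] != 0 ->
            [/\ defined_at fden x,
                on_hyp F (ratmap_ev fnum fden x),
                b.@[ratmap_ev fnum fden x] != 0,
                defined_at gden (ratmap_ev fnum fden x) &
                ratmap_ev gnum gden (ratmap_ev fnum fden x) = x]) &
        (forall y : 'I_n.+1 -> K, on_hyp F y -> b.@[y] != 0 ->
            [/\ defined_at gden y,
                a.@[ratmap_ev gnum gden y] != 0,
                defined_at fden (ratmap_ev gnum gden y) &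
                ratmap_ev fnum fden (ratmap_ev gnum gden y) = y])].

(* The polynomial (w^3-1)(t^2-1) - (z^3-1)(s^2-1) in coordinates
   (t,s,z,w) = ('X_0,'X_1,'X_2,'X_3). *)
Definition Fpoly (K : fieldType) : {mpoly K[4]} :=
  ('X_(3 : 'I_4) ^+ 3 - 1) * ('X_(0 : 'I_4) ^+ 2 - 1)
  - ('X_(2 : 'I_4) ^+ 3 - 1) * ('X_(1 : 'I_4) ^+ 2 - 1).

From HB Require Import structures.
From mathcomp Require Import all_boot all_order all_algebra.
From mathcomp Require Import reals.
From mathcomp.real_closed Require Import complex.
From mathcomp.multinomials Require Import mpoly.
From mathcomp Require Import ring.
From Stdlib Require Import FunctionalExtensionality.

(* The fibre of Q over (z, w) is the conic A (t^2 - 1) = B (s^2 - 1) with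
   A = w^3 - 1 and B = z^3 - 1, which passes through (1, 1). Projecting from
   that point, i.e. sending (m, z, w) to the second intersection of the line
   t - 1 = m (s - 1) with the conic, gives a birational map A^3 --> Q with
   inverse m = (t - 1) / (s - 1).
   The real work is showing that the open set where both maps are defined is
   Zariski dense in Q. A polynomial vanishing at the generic points of a
   rational curve vanishes on the whole curve, so it suffices to put every
   point of Q on a rational curve inside Q whose generic points are already
   known to lie in its closure. Such curves come from the same projection but
   centred at the other points (+-1, +-1) of the conics, with z or w moving;
   where the conics degenerate (z^3 = w^3 = 1) we first rescale z and w. *)

Set Implicit Arguments.
Unset Strict Implicit.
Unset Printing Implicit Defensive.

Import GRing.Theory Num.Theory.
Local Open Scope ring_scope.

(* Unlike [hornerE], this does not reassociate products or unfold powers. *)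
Definition horner_evalE :=
  (horner_exp, hornerD, hornerN, hornerCM, hornerM, hornerC, hornerX).

Definition vec4 (T : Type) (a b c d : T) : 'I_4 -> T := fun i => nth a [:: a; b; c; d] i.

Lemma vec4_eta (T : Type) (y : 'I_4 -> T) : y = vec4 (y 0) (y 1) (y 2) (y 3).
Proof.
apply: functional_extensionality => -[[|[|[|[|i]]]] Hi] //=.
all: by rewrite /vec4 /=; congr y; apply: val_inj.
Qed.

Lemma vec4E (T : Type) (a b c d : T) :
  (vec4 a b c d 0 = a) * (vec4 a b c d 1 = b) * (vec4 a b c d 2 = c) * (vec4 a b c d 3 = d).
Proof. by []. Qed.

Lemma vec4_ext (T : Type) (f g : 'I_4 -> T) :
  f 0 = g 0 -> f 1 = g 1 -> f 2 = g 2 -> f 3 = g 3 -> f = g.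
Proof. by move=> e0 e1 e2 e3; rewrite (vec4_eta f) (vec4_eta g) e0 e1 e2 e3. Qed.

Definition vec3 (T : Type) (a b c : T) : 'I_3 -> T := fun i => nth a [:: a; b; c] i.

Lemma vec3_eta (T : Type) (x : 'I_3 -> T) : x = vec3 (x 0) (x 1) (x 2).
Proof.
apply: functional_extensionality => -[[|[|[|i]]] Hi] //=.
all: by rewrite /vec3 /=; congr x; apply: val_inj.
Qed.

Lemma vec3E (T : Type) (a b c : T) :
  (vec3 a b c 0 = a) * (vec3 a b c 1 = b) * (vec3 a b c 2 = c).
Proof. by []. Qed.

Lemma vec3_ext (T : Type) (f g : 'I_3 -> T) :
  f 0 = g 0 -> f 1 = g 1 -> f 2 = g 2 -> f = g.
Proof. by move=> e0 e1 e2; rewrite (vec3_eta f) (vec3_eta g) e0 e1 e2. Qed.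

Section RationalCurves.
Variable K : numFieldType.

Lemma poly_neq0_at (q : {poly K}) x : q.[x] != 0 -> q != 0.
Proof. by apply: contraNneq => ->; rewrite horner0. Qed.

Lemma horner_all0_poly0 (q : {poly K}) : (forall x, q.[x] = 0) -> q = 0.
Proof.
move=> q0; apply/eqP; apply: contraT => nz_q.
have := max_poly_roots nz_q (rs := [seq i%:R | i <- iota 0 (size q)]).
rewrite size_map size_iota ltnn; apply.
  by apply/allP => x _; rewrite /root q0.
by rewrite map_inj_uniq ?iota_uniq // => i j /eqP; rewrite eqr_nat => /eqP.
Qed.

Lemma meval_clear_denominators (n : nat) (p : {mpoly K[n]})
    (N : 'I_n -> {poly K}) (D : {poly K}) :
  exists P : {poly K}, forall l, D.[l] != 0 ->
    P.[l] = D.[l] ^+ msize p * p.@[fun i => (N i).[l] / D.[l]].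
Proof.
exists (\sum_(m <- msupp p)
  p@_m *: (\prod_(i < n) N i ^+ m i * D ^+ (msize p - mdeg m))) => l Dl.
rewrite mevalE horner_sum mulr_sumr; apply: eq_big_seq => m /msize_mdeg_lt lt_m.
rewrite hornerZ hornerM horner_prod horner_exp.
under eq_bigr do rewrite horner_exp.
have -> : \prod_(i < n) ((N i).[l] / D.[l]) ^+ m i =
    (\prod_(i < n) (N i).[l] ^+ m i) / D.[l] ^+ mdeg m.
  rewrite mdegE -prodrXr -prodfV -big_split /=; apply: eq_bigr => i _.
  by rewrite exprMn exprVn.
have Dm : D.[l] ^+ mdeg m != 0 by rewrite expf_neq0.
rewrite -(subnK (ltnW lt_m)) addnK exprD.
set P := \prod_(i < n) _; set e := D.[l] ^+ _; set d := D.[l] ^+ mdeg m in Dm *.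
by clearbody P e d; field.
Qed.

(* Clearing denominators turns [p] along the curve into a polynomial; it
   vanishes off the finitely many roots of [D * G], hence everywhere. *)
Lemma meval_curve_eq0 (n : nat) (p : {mpoly K[n]}) (N : 'I_n -> {poly K})
    (D G : {poly K}) (l0 : K) :
  D.[l0] != 0 -> G != 0 ->
  (forall l, D.[l] != 0 -> G.[l] != 0 -> p.@[fun i => (N i).[l] / D.[l]] = 0) ->
  p.@[fun i => (N i).[l0] / D.[l0]] = 0.
Proof.
move=> Dl0 nz_G p0; have [P PE] := meval_clear_denominators p N D.
have : P * G * D = 0.
  apply: horner_all0_poly0 => l; rewrite !hornerM.
  have [->|Dl] := eqVneq D.[l] 0; first by rewrite mulr0.
  have [->|Gl] := eqVneq G.[l] 0; first by rewrite mulr0 mul0r.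
  by rewrite PE // p0 // mulr0 !mul0r.
move/eqP; rewrite !mulf_eq0 (negbTE nz_G) orbF => /orP[/eqP P0|/eqP D0].
  have := PE _ Dl0; rewrite P0 horner0 => /esym/eqP.
  by rewrite mulf_eq0 expf_eq0 (negbTE Dl0) andbF => /eqP.
by move: Dl0; rewrite D0 horner0 eqxx.
Qed.

Lemma meval_polycurve_eq0 (n : nat) (p : {mpoly K[n]}) (N : 'I_n -> {poly K})
    (G : {poly K}) (l0 : K) :
  G != 0 -> (forall l, G.[l] != 0 -> p.@[fun i => (N i).[l]] = 0) ->
  p.@[fun i => (N i).[l0]] = 0.
Proof.
move=> nz_G p0; have E l : (fun i => (N i).[l] / 1.[l]) =1 (fun i => (N i).[l]).
  by move=> i; rewrite hornerC divr1.
rewrite -(meval_eq p (E l0)); apply: meval_curve_eq0 nz_G _ => [|l _ Gl].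
  by rewrite hornerC oner_eq0.
by rewrite (meval_eq p (E l)) p0.
Qed.

End RationalCurves.

Section ConicCharts.
Variable K : fieldType.
Implicit Types a b t s m : K.

Definition conic a b t s := a * (t ^+ 2 - 1) = b * (s ^+ 2 - 1).

(* The line [t - e1 = m (s - e2)] through the point [(e1, e2)] of the conic
   meets it again at [(e1 + m * u, e2 + u)] with [u = chart_u a b e1 e2 m]. *)
Definition chart_u a b (e1 e2 : K) m := 2 * (b * e2 - a * e1 * m) / (a * m ^+ 2 - b).

Lemma conic_chart a b (e1 e2 : K) m : e1 ^+ 2 = 1 -> e2 ^+ 2 = 1 -> a * m ^+ 2 != b ->
  conic a b (e1 + m * chart_u a b e1 e2 m) (e2 + chart_u a b e1 e2 m).
Proof.
move=> e1_sign e2_sign den; set u := chart_u a b e1 e2 m.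
have u_eq : (a * m ^+ 2 - b) * u = 2 * (b * e2 - a * e1 * m).
  by rewrite /u /chart_u mulrC mulfVK // subr_eq0.
apply/eqP; rewrite -subr_eq0; apply/eqP.
transitivity (a * (e1 ^+ 2 - 1) - b * (e2 ^+ 2 - 1)
  + u * ((a * m ^+ 2 - b) * u - 2 * (b * e2 - a * e1 * m))); first by ring.
by rewrite e1_sign e2_sign u_eq !subrr !mulr0 subrr addr0.
Qed.

Lemma chart_slope_den_neq0 a b t s (e1 e2 : K) : s != e2 ->
  a * (t - e1) ^+ 2 != b * (s - e2) ^+ 2 -> a * ((t - e1) / (s - e2)) ^+ 2 != b.
Proof.
rewrite -subr_eq0 => se2 den; apply: contraNneq den => den0.
apply/eqP; rewrite -den0; field.
by rewrite se2.
Qed.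

Lemma chart_u_at a b t s (e1 e2 : K) : conic a b t s -> e1 ^+ 2 = 1 -> e2 ^+ 2 = 1 ->
  s != e2 -> a * (t - e1) ^+ 2 != b * (s - e2) ^+ 2 ->
  chart_u a b e1 e2 ((t - e1) / (s - e2)) = s - e2.
Proof.
move=> Q e1_sign e2_sign se2 den.
have := chart_slope_den_neq0 se2 den; rewrite -subr_eq0 => den'.
rewrite -subr_eq0 in se2; rewrite /chart_u; apply: (canLR (mulfK den')).
apply/eqP; rewrite eq_sym -subr_eq0; apply/eqP.
transitivity ((a * (t ^+ 2 - 1) - b * (s ^+ 2 - 1)
  - a * (e1 ^+ 2 - 1) + b * (e2 ^+ 2 - 1)) / (s - e2)); first by field.
by rewrite Q e1_sign e2_sign !subrr !mulr0 subrr addr0 mul0r.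
Qed.

End ConicCharts.

Section ConicChartExistence.
Variable K : numFieldType.
Implicit Types a b t s : K.

Lemma sign_neq (s : K) : exists e : K, e ^+ 2 = 1 /\ s != e.
Proof.
have [->|s1] := eqVneq s 1; last by exists 1; rewrite expr1n.
exists (-1); rewrite sqrrN expr1n; split => //.
by rewrite -subr_eq0 opprK -mulr2n pnatr_eq0.
Qed.

Lemma neq_or (x y c : K) : x != y -> x != c \/ y != c.
Proof. by move=> xy; case: (eqVneq x c) => [xc|]; [right; rewrite -xc eq_sym | left]. Qed.

Lemma conic_den11_neq0 a b t s : conic a b t s -> a != 0 -> b != 0 -> a != b ->
  s != 1 -> a * (t - 1) ^+ 2 != b * (s - 1) ^+ 2.
Proof.
move=> Q a0 b0 ab s1; apply/eqP => den0.
have : 2 * a * (t - 1) * (t - s) = 0.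
  transitivity ((a * (t - 1) ^+ 2 - b * (s - 1) ^+ 2) * (s + 1)
    - (s - 1) * (a * (t ^+ 2 - 1) - b * (s ^+ 2 - 1))); first by ring.
  by rewrite den0 Q !subrr mul0r mulr0 subrr.
move/eqP; rewrite !mulf_eq0 pnatr_eq0 (negbTE a0) /= !subr_eq0 => /orP[/eqP t1 | /eqP ts].
  move: den0; rewrite t1 subrr expr0n mulr0 => /esym/eqP.
  by rewrite mulf_eq0 (negbTE b0) expf_eq0 subr_eq0 (negbTE s1) andbF.
move/eqP: den0; rewrite ts -subr_eq0 -mulrBl mulf_eq0 subr_eq0 (negbTE ab).
by rewrite expf_eq0 subr_eq0 (negbTE s1) andbF.
Qed.

(* The only point out of reach of the charts centred at [(+-1, +-1)] is the
   double point [(0, 0)] of the line pair [t^2 = s^2] (the case [a = b]). *)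
Lemma conic_chart_exists a b t s : conic a b t s -> (a != 0) || (b != 0) ->
  (a != b) || (t != 0) ->
  exists e1 e2 : K, [/\ e1 ^+ 2 = 1, e2 ^+ 2 = 1, s != e2
                      & a * (t - e1) ^+ 2 != b * (s - e2) ^+ 2].
Proof.
move=> Q ab0 abt; have [e2 [e2_sign se2]] := sign_neq s.
have [a0|a0] := eqVneq a 0.
  exists 1, e2; split; rewrite ?expr1n // a0 mul0r eq_sym.
  by rewrite mulf_neq0 ?expf_neq0 ?subr_eq0 //; move: ab0; rewrite a0 eqxx.
have [t0|t0] := eqVneq t 0; last first.
  have : a * (t - 1) ^+ 2 != a * (t - -1) ^+ 2.
    rewrite -subr_eq0; have -> : a * (t - 1) ^+ 2 - a * (t - -1) ^+ 2 = - (4%:R * a * t) by ring.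
    by rewrite oppr_eq0 !mulf_neq0 // pnatr_eq0.
  case/(neq_or (b * (s - e2) ^+ 2)) => [den|den].
    by exists 1, e2; rewrite expr1n.
  by exists (-1), e2; rewrite sqrrN expr1n.
rewrite t0 eqxx orbF in abt.
move: Q; rewrite /conic t0 expr0n sub0r mulrN1 => Q.
have s_sign : s ^+ 2 - 1 != 0.
  by apply: contra_neq a0 => s2; apply/eqP; rewrite -oppr_eq0 Q s2 mulr0.
have b0 : b != 0 by apply: contra_neq a0 => b0; apply/eqP; rewrite -oppr_eq0 Q b0 mul0r.
have s0 : s != 0.
  by apply: contra_neq abt => s0; rewrite -[a]opprK Q s0 expr0n sub0r mulrN1 opprK.
have : b * (s - 1) ^+ 2 != b * (s - -1) ^+ 2.
  rewrite -subr_eq0; have -> : b * (s - 1) ^+ 2 - b * (s - -1) ^+ 2 = - (4%:R * b * s) by ring.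
  by rewrite oppr_eq0 !mulf_neq0 // pnatr_eq0.
case/(neq_or a) => den; rewrite eq_sym in den; [exists 1, 1 | exists 1, (-1)];
  rewrite sub0r sqrrN ?sqrrN !expr1n mulr1; split => //;
  by apply: contraNneq s_sign => ->; rewrite ?sqrrN expr1n subrr.
Qed.

End ConicChartExistence.

Section CurvesInFourSpace.
Variable K : numFieldType.
Implicit Types (a b c d mm zz ww G : {poly K}) (p : {mpoly K[4]}).

Lemma meval_vec4_polycurve_eq0 p a b c d G l0 : G != 0 ->
  (forall l, G.[l] != 0 -> p.@[vec4 a.[l] b.[l] c.[l] d.[l]] = 0) ->
  p.@[vec4 a.[l0] b.[l0] c.[l0] d.[l0]] = 0.
Proof.
have E l : (fun i => (vec4 a b c d i).[l]) =1 vec4 a.[l] b.[l] c.[l] d.[l].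
  by move=> -[[|[|[|[|i]]]] Hi].
move=> nz_G p0; rewrite -(meval_eq p (E l0)).
by apply: meval_polycurve_eq0 nz_G _ => l Gl; rewrite (meval_eq p (E l)) p0.
Qed.

Definition chart_pt (a b e1 e2 m z w : K) : 'I_4 -> K :=
  vec4 (e1 + m * chart_u a b e1 e2 m) (e2 + chart_u a b e1 e2 m) z w.

Lemma chart_pt_at (a b t s z w e1 e2 : K) : conic a b t s ->
  e1 ^+ 2 = 1 -> e2 ^+ 2 = 1 -> s != e2 -> a * (t - e1) ^+ 2 != b * (s - e2) ^+ 2 ->
  chart_pt a b e1 e2 ((t - e1) / (s - e2)) z w = vec4 t s z w.
Proof.
move=> Q e1_sign e2_sign se2 den; rewrite /chart_pt chart_u_at //.
by rewrite mulfVK ?subr_eq0 // [e1 + _]addrC [e2 + _]addrC !subrK.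
Qed.

Lemma chart_curve_eq0 p a b mm zz ww G (e1 e2 l0 : K) :
  G != 0 -> a.[l0] * mm.[l0] ^+ 2 != b.[l0] ->
  (forall l, a.[l] * mm.[l] ^+ 2 != b.[l] -> G.[l] != 0 ->
     p.@[chart_pt a.[l] b.[l] e1 e2 mm.[l] zz.[l] ww.[l]] = 0) ->
  p.@[chart_pt a.[l0] b.[l0] e1 e2 mm.[l0] zz.[l0] ww.[l0]] = 0.
Proof.
pose D := a * mm ^+ 2 - b; pose U := 2%:P * (b * e2%:P - a * e1%:P * mm).
have DE l : D.[l] = a.[l] * mm.[l] ^+ 2 - b.[l] by rewrite /D !horner_evalE.
have UE l : U.[l] = 2 * (b.[l] * e2 - a.[l] * e1 * mm.[l]) by rewrite /U !horner_evalE.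
clearbody D U; pose N := vec4 (e1%:P * D + mm * U) (e2%:P * D + U) (zz * D) (ww * D).
have NE l : a.[l] * mm.[l] ^+ 2 != b.[l] ->
    (fun i => (N i).[l] / D.[l]) =1 chart_pt a.[l] b.[l] e1 e2 mm.[l] zz.[l] ww.[l].
  rewrite -subr_eq0 -DE => Dl -[[|[|[|[|i]]]] Hi] //=;
    by rewrite !horner_evalE /chart_pt /vec4 /= /chart_u -?DE -?UE; field.
move=> nz_G den0 p0; rewrite -(meval_eq p (NE _ den0)).
apply: meval_curve_eq0 nz_G _ => [|l Dl Gl]; first by rewrite DE subr_eq0.
by rewrite (meval_eq p (NE l _)) ?p0 // -subr_eq0 -DE.
Qed.

Definition chart_s1_num a b mm (e1 e2 : K) : {poly K} :=
  (e2 - 1)%:P * (a * mm ^+ 2 - b) + 2%:P * (b * e2%:P - a * e1%:P * mm).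

Lemma chart_s1_numE a b mm (e1 e2 l : K) : a.[l] * mm.[l] ^+ 2 != b.[l] ->
  (chart_s1_num a b mm e1 e2).[l] =
    (e2 + chart_u a.[l] b.[l] e1 e2 mm.[l] - 1) * (a.[l] * mm.[l] ^+ 2 - b.[l]).
Proof.
by rewrite -subr_eq0 => den; rewrite /chart_s1_num /chart_u !horner_evalE; field.
Qed.

End CurvesInFourSpace.

Section Density.
Variable K : numFieldType.
Variable p : {mpoly K[4]}.
Implicit Types t s z w : K.

Hypothesis p_vanish_generic : forall t s z w,
  conic (w ^+ 3 - 1) (z ^+ 3 - 1) t s -> s != 1 ->
  (w ^+ 3 - 1) * (t - 1) ^+ 2 != (z ^+ 3 - 1) * (s - 1) ^+ 2 ->
  p.@[vec4 t s z w] = 0.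

Lemma vanish_chart_generic (z w m e1 e2 : K) :
  e1 ^+ 2 = 1 -> e2 ^+ 2 = 1 -> w ^+ 3 - 1 != 0 -> z ^+ 3 - 1 != 0 ->
  w ^+ 3 - 1 != z ^+ 3 - 1 -> (w ^+ 3 - 1) * m ^+ 2 != z ^+ 3 - 1 ->
  e2 + chart_u (w ^+ 3 - 1) (z ^+ 3 - 1) e1 e2 m != 1 ->
  p.@[chart_pt (w ^+ 3 - 1) (z ^+ 3 - 1) e1 e2 m z w] = 0.
Proof.
move=> e1_sign e2_sign a0 b0 ab den s1; have Q := conic_chart e1_sign e2_sign den.
by apply: p_vanish_generic => //; apply: conic_den11_neq0.
Qed.

Lemma vanish_chart_along (zz ww : {poly K}) t s (e1 e2 : K) :
  ww ^+ 3 - 1 != 0 -> zz ^+ 3 - 1 != 0 -> ww ^+ 3 - 1 != zz ^+ 3 - 1 ->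
  conic (ww.[0] ^+ 3 - 1) (zz.[0] ^+ 3 - 1) t s ->
  e1 ^+ 2 = 1 -> e2 ^+ 2 = 1 -> s != e2 ->
  (ww.[0] ^+ 3 - 1) * (t - e1) ^+ 2 != (zz.[0] ^+ 3 - 1) * (s - e2) ^+ 2 ->
  p.@[vec4 t s zz.[0] ww.[0]] = 0.
Proof.
set a := ww ^+ 3 - 1; set b := zz ^+ 3 - 1.
have aE l : a.[l] = ww.[l] ^+ 3 - 1 by rewrite /a !horner_evalE.
have bE l : b.[l] = zz.[l] ^+ 3 - 1 by rewrite /b !horner_evalE.
clearbody a b.
rewrite -!aE -!bE => a0 b0 ab Q e1_sign e2_sign se2 den.
(* A varying slope keeps the curve off [s = 1] even when it starts there. *)
pose m0 := (t - e1) / (s - e2); pose mm := m0%:P + 'X.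
have mmE l : mm.[l] = m0 + l by rewrite /mm !horner_evalE.
have nz_mm : mm != 0 by apply: (@poly_neq0_at _ _ (1 - m0)); rewrite mmE addrC subrK oner_eq0.
have nz_mme : mm + e1%:P != 0.
  apply: (@poly_neq0_at _ _ (- m0)); rewrite hornerD mmE hornerC addrN add0r.
  by apply/eqP => e10; move: e1_sign; rewrite e10 expr0n => /eqP; rewrite eq_sym oner_eq0.
clearbody mm.
have den0 : a.[0] * mm.[0] ^+ 2 != b.[0] by rewrite mmE addr0 chart_slope_den_neq0.
have mm0 : mm.[0] = m0 by rewrite mmE addr0.
pose S := chart_s1_num a b mm e1 e2.
have nz_S : S != 0.
  have [s1|s1] := eqVneq s 1.
    have e2m1 : e2 = -1.
      move/eqP: e2_sign; rewrite sqrf_eq1 => /orP[/eqP e21|/eqP //].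
      by move: se2; rewrite s1 e21 eqxx.
    have -> : S = (- 2)%:P * (a * mm * (mm + e1%:P)).
      by rewrite /S /chart_s1_num e2m1 !(polyCB, polyCN, polyC1) polyC_natr; ring.
    by rewrite !mulf_neq0 // polyC_eq0 oppr_eq0 pnatr_eq0.
  apply: (@poly_neq0_at _ _ 0); rewrite chart_s1_numE // mm0 chart_u_at // [e2 + _]addrC subrK.
  by rewrite mulf_neq0 ?subr_eq0 // -mm0.
have -> : vec4 t s zz.[0] ww.[0] = chart_pt a.[0] b.[0] e1 e2 mm.[0] zz.[0] ww.[0].
  by rewrite mm0 chart_pt_at.
apply: (@chart_curve_eq0 _ _ _ _ _ _ _ (a * b * (a - b) * S)) => //.
  by rewrite !mulf_neq0 ?subr_eq0.
move=> l den_l; rewrite !hornerM !mulf_eq0 !negb_or hornerD hornerN subr_eq0.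
move=> /andP[/andP[/andP[al bl] abl] Sl].
have sl1 : e2 + chart_u a.[l] b.[l] e1 e2 mm.[l] != 1.
  by apply: contraNneq Sl => sl1; rewrite chart_s1_numE // sl1 subrr mul0r.
by move: al bl abl den_l sl1; rewrite !aE !bE => *; apply: vanish_chart_generic.
Qed.

Lemma vanish_chart t s z w (e1 e2 : K) :
  conic (w ^+ 3 - 1) (z ^+ 3 - 1) t s -> e1 ^+ 2 = 1 -> e2 ^+ 2 = 1 -> s != e2 ->
  (w ^+ 3 - 1) * (t - e1) ^+ 2 != (z ^+ 3 - 1) * (s - e2) ^+ 2 ->
  p.@[vec4 t s z w] = 0.
Proof.
move=> Q e1_sign e2_sign se2 den.
have const_neq0 (c : K) : c ^+ 3 - 1 != 0 -> c%:P ^+ 3 - 1 != 0.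
  by move=> c0; apply: (@poly_neq0_at _ _ 0); rewrite !horner_evalE.
have shift_neq0 (c : K) : (c%:P + 'X) ^+ 3 - 1 != 0.
  apply: (@poly_neq0_at _ _ (- c)).
  by rewrite !horner_evalE addrN expr0n sub0r oppr_eq0 oner_eq0.
have shift_neq_const (c d : K) : d ^+ 3 - 1 != 0 ->
    (c%:P + 'X) ^+ 3 - 1 != d%:P ^+ 3 - 1.
  move=> d0; rewrite -subr_eq0; apply: (@poly_neq0_at _ _ (1 - c)).
  by rewrite !horner_evalE addrCA subrr addr0 expr1n subrr sub0r oppr_eq0.
have [b0|b0] := eqVneq (z ^+ 3 - 1) 0.
  have a0 : w ^+ 3 - 1 != 0 by apply: contraNneq den => a0; rewrite a0 b0 !mul0r.
  have := @vanish_chart_along (z%:P + 'X) w%:P t s e1 e2.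
  rewrite !horner_evalE addr0; apply; rewrite ?const_neq0 ?shift_neq0 //.
  by rewrite eq_sym shift_neq_const.
have := @vanish_chart_along z%:P (w%:P + 'X) t s e1 e2.
by rewrite !horner_evalE addr0; apply; rewrite ?const_neq0 ?shift_neq0 ?shift_neq_const.
Qed.

Lemma vanish_off_cube_roots t s z w : conic (w ^+ 3 - 1) (z ^+ 3 - 1) t s ->
  (w ^+ 3 - 1 != 0) || (z ^+ 3 - 1 != 0) -> p.@[vec4 t s z w] = 0.
Proof.
set a := w ^+ 3 - 1; set b := z ^+ 3 - 1 => Q ab0.
have off_vertex t' s' : conic a b t' s' -> (a != b) || (t' != 0) ->
    p.@[vec4 t' s' z w] = 0.
  move=> Q' abt; have [e1 [e2 [e1_sign e2_sign se2 den]]] := conic_chart_exists Q' ab0 abt.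
  exact: vanish_chart Q' e1_sign e2_sign se2 den.
have [abt|] := boolP ((a != b) || (t != 0)); first exact: off_vertex.
rewrite negb_or !negbK => /andP[/eqP ab /eqP t0].
have a0 : a != 0 by move: ab0; rewrite ab orbb.
have s0 : s = 0.
  move: Q; rewrite /conic t0 -ab => /(mulfI a0)/addIr/esym/eqP.
  by rewrite expr0n sqrf_eq0 => /eqP.
rewrite t0 s0; have := @meval_vec4_polycurve_eq0 _ p 'X (- 'X) z%:P w%:P 'X 0.
rewrite !horner_evalE oppr0; apply; first by rewrite polyX_eq0.
move=> l; rewrite !horner_evalE => l0; apply: off_vertex; last by rewrite l0 orbT.
by rewrite /conic sqrrN ab.
Qed.

Lemma vanish_cube_roots_diag t s z w : w ^+ 3 = 1 -> z ^+ 3 = 1 ->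
  t ^+ 2 = s ^+ 2 -> p.@[vec4 t s z w] = 0.
Proof.
move=> w3 z3 ts.
have := @meval_vec4_polycurve_eq0 _ p t%:P s%:P (z%:P * (1 + 'X)) (w%:P * (1 + 'X))
  ((1 + 'X) ^+ 3 - 1) 0.
rewrite !horner_evalE addr0 !mulr1; apply.
  apply: (@poly_neq0_at _ _ (-1)).
  by rewrite !horner_evalE subrr expr0n sub0r oppr_eq0 oner_eq0.
move=> l; rewrite !horner_evalE => Gl; apply: vanish_off_cube_roots.
  by rewrite /conic !exprMn w3 z3 !mul1r ts.
by rewrite exprMn w3 mul1r Gl.
Qed.

(* Over [z ^+ 3 = w ^+ 3 = 1] the conic is degenerate. Moving [z] and [w] to
   [z (1 + (t^2 - 1) l)] and [w (1 + (s^2 - 1) l)] divides both coefficients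
   by [l]; the rescaled conic at [l = 0] has coefficients [3 (s^2 - 1)] and
   [3 (t^2 - 1)], passes through [(t, s)], and a chart of it gives the curve. *)
Lemma vanish_cube_roots_offdiag t s z w : w ^+ 3 = 1 -> z ^+ 3 = 1 ->
  t ^+ 2 != s ^+ 2 -> p.@[vec4 t s z w] = 0.
Proof.
move=> w3 z3 ts.
pose dq (c : K) : {poly K} := (3 * c)%:P + (3 * c ^+ 2)%:P * 'X + (c ^+ 3)%:P * 'X ^+ 2.
have scaled_cube (x c l : K) : x ^+ 3 = 1 -> (x * (1 + c * l)) ^+ 3 - 1 = l * (dq c).[l].
  by move=> x3; rewrite /dq !horner_evalE exprMn x3 mul1r; ring.
have dq0 c : (dq c).[0] = 3 * c.
  by rewrite /dq !horner_evalE expr0n /= !mulr0 !addr0.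
clearbody dq.
set ta := t ^+ 2 - 1; set sb := s ^+ 2 - 1.
have sbta : 3 * sb != 3 * ta.
  by apply: contra_neq ts => /(mulfI (_ : 3 != 0))/addIr -> //; rewrite pnatr_eq0.
have Q3 : conic (3 * sb) (3 * ta) t s by rewrite /conic -/ta -/sb mulrAC.
have ab0 : (3 * sb != 0) || (3 * ta != 0).
  by rewrite -negb_and; apply: contra sbta => /andP[/eqP -> /eqP ->].
have abt : (3 * sb != 3 * ta) || (t != 0) by rewrite sbta.
have [e1 [e2 [e1_sign e2_sign se2 den]]] := conic_chart_exists Q3 ab0 abt.
pose zz := z%:P * (1 + ta%:P * 'X); pose ww := w%:P * (1 + sb%:P * 'X).
have zzE l : zz.[l] = z * (1 + ta * l) by rewrite /zz !horner_evalE.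
have wwE l : ww.[l] = w * (1 + sb * l) by rewrite /ww !horner_evalE.
clearbody zz ww.
have := @chart_curve_eq0 _ p (dq sb) (dq ta) ((t - e1) / (s - e2))%:P zz ww
  ('X * (dq sb - dq ta)) e1 e2 0.
rewrite hornerC zzE wwE !mulr0 !addr0 !mulr1 !dq0 chart_pt_at //; apply.
- rewrite mulf_neq0 ?polyX_eq0 //; apply: (@poly_neq0_at _ _ 0).
  by rewrite hornerD hornerN !dq0 subr_eq0.
- exact: chart_slope_den_neq0.
move=> l; rewrite hornerC hornerM hornerX hornerD hornerN => den_l Gl.
rewrite /chart_pt; apply: vanish_off_cube_roots; rewrite zzE wwE !scaled_cube //.
  by rewrite /conic -[l * _ * _]mulrA (conic_chart e1_sign e2_sign den_l) mulrA.
rewrite -negb_and; apply: contra Gl => /andP[/eqP A0 /eqP B0].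
by rewrite mulrBr A0 B0 subrr.
Qed.

Lemma vanish_on_Q t s z w : conic (w ^+ 3 - 1) (z ^+ 3 - 1) t s -> p.@[vec4 t s z w] = 0.
Proof.
move=> Q; have [|] := boolP ((w ^+ 3 - 1 != 0) || (z ^+ 3 - 1 != 0)).
  exact: vanish_off_cube_roots.
rewrite negb_or !negbK !subr_eq0 => /andP[/eqP w3 /eqP z3].
have [ts|ts] := eqVneq (t ^+ 2) (s ^+ 2).
  exact: vanish_cube_roots_diag.
exact: vanish_cube_roots_offdiag.
Qed.

End Density.

Section Birationality.
Variable K : numFieldType.
Implicit Types t s z w m : K.

Lemma on_hyp_Fpoly t s z w :
  on_hyp (Fpoly K) (vec4 t s z w) <-> conic (w ^+ 3 - 1) (z ^+ 3 - 1) t s.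
Proof.
rewrite /on_hyp /Fpoly !(mevalB, mevalM, rmorphXn, mevalXU, meval1) !vec4E.
split=> [/eqP|Q]; first by rewrite subr_eq0 => /eqP.
by rewrite Q subrr.
Qed.

Definition bpoly : {mpoly K[4]} := ('X_1 - 1) *
  (('X_3 ^+ 3 - 1) * ('X_0 - 1) ^+ 2 - ('X_2 ^+ 3 - 1) * ('X_1 - 1) ^+ 2).

Lemma bpoly_vec4 t s z w : bpoly.@[vec4 t s z w] =
  (s - 1) * ((w ^+ 3 - 1) * (t - 1) ^+ 2 - (z ^+ 3 - 1) * (s - 1) ^+ 2).
Proof. by rewrite /bpoly !(mevalB, mevalM, rmorphXn, mevalXU, meval1) !vec4E. Qed.

Lemma vanish_on_Fpoly (p : {mpoly K[4]}) :
  (forall y, on_hyp (Fpoly K) y -> bpoly.@[y] != 0 -> p.@[y] = 0) ->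
  forall y, on_hyp (Fpoly K) y -> p.@[y] = 0.
Proof.
move=> p0 y; rewrite (vec4_eta y) => /on_hyp_Fpoly Q.
apply: (vanish_on_Q _ Q) => t s z w Q' s1 den.
by apply: p0; [exact/on_hyp_Fpoly | rewrite bpoly_vec4 mulf_neq0 ?subr_eq0].
Qed.

Definition slope_den : {mpoly K[3]} := ('X_2 ^+ 3 - 1) * 'X_0 ^+ 2 - ('X_1 ^+ 3 - 1).
Definition slope_num : {mpoly K[3]} := 2 * (('X_1 ^+ 3 - 1) - ('X_2 ^+ 3 - 1) * 'X_0).

(* Besides the denominator of the chart, [apoly] excludes the zeros of the
   numerator of its [u], so that the image avoids [s = 1]. *)
Definition apoly : {mpoly K[3]} := slope_den * slope_num.
Definition fnum : 'I_4 -> {mpoly K[3]} :=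
  vec4 (slope_den + 'X_0 * slope_num) (slope_den + slope_num) 'X_1 'X_2.
Definition fden : 'I_4 -> {mpoly K[3]} := vec4 slope_den slope_den 1 1.
Definition gnum : 'I_3 -> {mpoly K[4]} := vec3 ('X_0 - 1) 'X_2 'X_3.
Definition gden : 'I_3 -> {mpoly K[4]} := vec3 ('X_1 - 1) 1 1.

Lemma slope_denE m z w : slope_den.@[vec3 m z w] = (w ^+ 3 - 1) * m ^+ 2 - (z ^+ 3 - 1).
Proof. by rewrite /slope_den !(mevalB, mevalM, rmorphXn, mevalXU, meval1) !vec3E. Qed.

Lemma slope_numE m z w :
  slope_num.@[vec3 m z w] = 2 * ((z ^+ 3 - 1) - (w ^+ 3 - 1) * m).
Proof.
by rewrite /slope_num !(mevalB, mevalM, rmorphXn, mevalXU, meval1, rmorph_nat) !vec3E.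
Qed.

Lemma fden_vec3 m z w : slope_den.@[vec3 m z w] != 0 ->
  defined_at fden (vec3 m z w).
Proof.
by move=> den -[[|[|[|[|i]]]] Hi] //=; rewrite /fden /vec4 /= ?meval1 ?oner_eq0.
Qed.

Lemma fmap_vec3 m z w : slope_den.@[vec3 m z w] != 0 ->
  ratmap_ev fnum fden (vec3 m z w) = chart_pt (w ^+ 3 - 1) (z ^+ 3 - 1) 1 1 m z w.
Proof.
rewrite slope_denE => den; apply: vec4_ext;
  rewrite /ratmap_ev /fnum /fden /chart_pt /chart_u !vec4E.
- by rewrite mevalD mevalM mevalXU vec3E slope_numE slope_denE; field.
- by rewrite mevalD slope_numE slope_denE; field.
- by rewrite meval1 divr1 mevalXU vec3E.
- by rewrite meval1 divr1 mevalXU vec3E.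
Qed.

Lemma apoly_neq0 : apoly != 0.
Proof.
apply/eqP => /(congr1 (meval (vec3 0 0 0))); rewrite meval0 mevalM slope_denE slope_numE.
rewrite !expr0n /= !(mulr0, sub0r, subr0, opprK, mulrN1, mul1r) => /eqP.
by rewrite oppr_eq0 pnatr_eq0.
Qed.

Lemma gmap_vec4 t s z w : ratmap_ev gnum gden (vec4 t s z w) = vec3 ((t - 1) / (s - 1)) z w.
Proof.
apply: vec3_ext; rewrite /ratmap_ev /gnum /gden !vec3E;
  by rewrite ?(mevalB, mevalXU, meval1) ?divr1 !vec4E.
Qed.

Lemma gden_vec4 t s z w : s != 1 -> defined_at gden (vec4 t s z w).
Proof.
move=> s1 -[[|[|[|i]]] Hi] //=; rewrite /gden /vec3 /= ?meval1 ?oner_eq0 //.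
by rewrite mevalB mevalXU meval1 subr_eq0.
Qed.

Lemma forward_map_spec m z w : let x := vec3 m z w in apoly.@[x] != 0 ->
  [/\ defined_at fden x, on_hyp (Fpoly K) (ratmap_ev fnum fden x),
      bpoly.@[ratmap_ev fnum fden x] != 0,
      defined_at gden (ratmap_ev fnum fden x)
    & ratmap_ev gnum gden (ratmap_ev fnum fden x) = x].
Proof.
move=> x; rewrite /apoly mevalM mulf_eq0 negb_or => /andP[den num].
rewrite fmap_vec3 // /chart_pt.
have den' : (w ^+ 3 - 1) * m ^+ 2 != z ^+ 3 - 1 by rewrite -subr_eq0 -slope_denE.
set u := chart_u _ _ _ _ _.
have add1K (y : K) : 1 + y - 1 = y by rewrite addrAC subrr add0r.
have u0 : u != 0.
  by rewrite /u /chart_u !mulr1 -slope_numE mulf_neq0 // invr_neq0 // -slope_denE.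
split.
- exact: fden_vec3.
- by apply/on_hyp_Fpoly; apply: conic_chart; rewrite ?expr1n.
- rewrite bpoly_vec4 !add1K.
  have -> : u * ((w ^+ 3 - 1) * (m * u) ^+ 2 - (z ^+ 3 - 1) * u ^+ 2)
    = u ^+ 3 * ((w ^+ 3 - 1) * m ^+ 2 - (z ^+ 3 - 1)) by ring.
  by rewrite mulf_neq0 ?expf_neq0 ?subr_eq0.
- by apply: gden_vec4; rewrite -subr_eq0 add1K.
- by rewrite gmap_vec4 !add1K mulfK.
Qed.

Lemma backward_map_spec t s z w : let y := vec4 t s z w in
  on_hyp (Fpoly K) y -> bpoly.@[y] != 0 ->
  [/\ defined_at gden y, apoly.@[ratmap_ev gnum gden y] != 0,
      defined_at fden (ratmap_ev gnum gden y)
    & ratmap_ev fnum fden (ratmap_ev gnum gden y) = y].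
Proof.
move=> y; rewrite {}/y => /on_hyp_Fpoly Q; rewrite bpoly_vec4 mulf_eq0 negb_or subr_eq0.
move=> /andP[s1]; rewrite subr_eq0 => den11; rewrite gmap_vec4.
have den : slope_den.@[vec3 ((t - 1) / (s - 1)) z w] != 0.
  by rewrite slope_denE subr_eq0; exact: chart_slope_den_neq0.
have u_at := chart_u_at Q (expr1n _ _) (expr1n _ _) s1 den11.
split.
- exact: gden_vec4.
- rewrite /apoly mevalM mulf_neq0 // slope_numE.
  have : chart_u (w ^+ 3 - 1) (z ^+ 3 - 1) 1 1 ((t - 1) / (s - 1)) != 0.
    by rewrite u_at subr_eq0.
  by rewrite /chart_u !mulr1 mulf_eq0 negb_or => /andP[].
- exact: fden_vec3.
- by rewrite fmap_vec3 // chart_pt_at ?expr1n.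
Qed.

Lemma Fpoly_rational : rational_hypersurface (Fpoly K).
Proof.
exists apoly, bpoly, fnum, fden, gnum, gden; split.
- exact: apoly_neq0.
- exact: vanish_on_Fpoly.
- by move=> x; rewrite (vec3_eta x); apply: forward_map_spec.
- by move=> y; rewrite (vec4_eta y); apply: backward_map_spec.
Qed.

End Birationality.

Theorem proposition2p6 (R : realType) :
  rational_hypersurface (Fpoly (complex R)).
Proof. exact: Fpoly_rational. Qed.
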